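(* Let $k\in\mathbb{N}$, let $G$ be a digraph and $\mathcal{P}_k=\{V_{ij}:i,j\in[k]\}$ a $k^2$-partition of $V(G)$. Let $\mathcal{Q}$ be a path system all of whose edges lie in $\mathcal{B}_k(\mathcal{P}_k,G)$ such that for all $i\in[k]$, $$\sum_{j\neq i}a_{ij}-\sum_{j\neq i}a_{ji}=|V_{i*}|-|V_{*i}|,$$ where $a_{ij}=|E(\mathcal{Q})\cap E(V_{i*},V_{*j})|$ for $i\neq j$. Then contracting $\mathcal{Q}$ in $G$ with respect to $\mathcal{P}_k$ yields a digraph $G'$ with a $k^2$-partition $\mathcal{P}'_k=\{V'_{ij}:i,j\in[k]\}$ such that $|V'_{i*}|=|V'_{*i}|$ for all $i\in[k]$.
   Context: A path system is a set of vertex-disjoint directed paths. A $k^2$-partition of $V(G)$ is a family $\{V_{ij}:i,j\in[k]\}$ of pairwise disjoint (possibly empty) sets with union $V(G)$; $V_{i*}=\bigcup_jV_{ij}$, $V_{*j}=\bigcup_iV_{ij}$; $E(A,B)$ is the set of edges $ab$ with $a\in A,b\in B$; bad edges $\mathcal{B}_k(\mathcal{P}_k,G)=\bigcup_{i\neq j}E(V_{i*},V_{*j})$. Contraction: for each path $Q\in\mathcal{Q}$ from $u$ to $v$ create a new vertex $x_Q$; $V(G')=(V(G)\setminus V(\mathcal{Q}))\cup\{x_Q\}$. For $y\in V(G')$ put $y^-=y^+=y$ if $y\in V(G)$ and $x_Q^-=u$, $x_Q^+=v$; $yz\in E(G')$ iff $y^+z^-\in E(G)$. The resulting partition $\mathcal{P}'_k$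 has $V'_{ij}$ equal to $V_{ij}\setminus V(\mathcal{Q})$ together with all $x_Q$ for which $Q$ goes from $u\in V_{*j}$ to $v\in V_{i*}$; $V'_{i*},V'_{*j}$ are defined analogously. *)

From mathcomp Require Import all_boot all_order all_algebra.
Set Implicit Arguments. Unset Strict Implicit. Unset Printing Implicit Defensive.

(* Digraph G: vertex set a finType V, edge relation e : rel V.
   A k^2-partition of V(G): a map part : V -> 'I_k * 'I_k, V_ij = part^-1 (i,j). *)
Section Contraction.
Variables (V : finType) (k : nat) (e : rel V) (part : V -> 'I_k * 'I_k).

Definition Vij (i j : 'I_k) : {set V} := [set v | part v == (i, j)].
Definition Vrow (i : 'I_k) : {set V} := \bigcup_(j < k) Vij i j.
Definition Vcol (j : 'I_k) : {set V} := \bigcup_(i < k) Vij i j.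

Definition is_dipath (p : seq V) : bool :=
  if p is x :: s then path e x s && uniq p else false.

Definition path_system (Qs : seq (seq V)) : bool :=
  all is_dipath Qs && uniq (flatten Qs).

Definition path_edges (p : seq V) : seq (V * V) := zip p (behead p).

Definition ps_edges (Qs : seq (seq V)) : {set V * V} :=
  [set x | has (fun p => x \in path_edges p) Qs].

Definition Eset (A B : {set V}) : {set V * V} :=
  [set x | [&& e x.1 x.2, x.1 \in A & x.2 \in B]].

Definition bad_edges : {set V * V} :=
  \bigcup_(i < k) \bigcup_(j < k | i != j) Eset (Vrow i) (Vcol j).

Definition acount (Qs : seq (seq V)) (i j : 'I_k) : nat :=
  #|ps_edges Qs :&: Eset (Vrow i) (Vcol j)|.

Definition ps_verts (Qs : seq (seq V)) : {set V} := [set v | v \in flatten Qs].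

(* vertices of the contracted digraph G': the vertices outside V(Q), plus one
   new vertex x_Q for each path Q (indexed by its position in Qs) *)
Definition cvert (Qs : seq (seq V)) : finType :=
  ({v : V | v \notin ps_verts Qs} + 'I_(size Qs))%type.

(* y^- and y^+ (None only for the impossible empty path) *)
Definition cminus Qs (y : cvert Qs) : option V :=
  match y with
  | inl v => Some (val v)
  | inr q => if nth [::] Qs q is x :: _ then Some x else None
  end.
Definition cplus Qs (y : cvert Qs) : option V :=
  match y with
  | inl v => Some (val v)
  | inr q => if nth [::] Qs q is x :: s then Some (last x s) else None
  end.

Definition cedge Qs : rel (cvert Qs) := fun y z =>
  match cplus y, cminus z with Some a, Some b => e a b | _, _ => false end.

Definition goes_to (p : seq V) (i j : 'I_k) : bool :=
  if p is x :: s then ((part x).2 == j) && ((part (last x s)).1 == i) else false.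

Definition cVij Qs (i j : 'I_k) : {set cvert Qs} :=
  [set y : cvert Qs | match y with
                      | inl v => val v \in Vij i j
                      | inr q => goes_to (nth [::] Qs q) i j
                      end].
Definition cVrow Qs (i : 'I_k) : {set cvert Qs} := \bigcup_(j < k) cVij Qs i j.
Definition cVcol Qs (j : 'I_k) : {set cvert Qs} := \bigcup_(i < k) cVij Qs i j.

End Contraction.

From mathcomp Require Import all_boot all_order all_algebra.
From mathcomp Require Import zify.
Set Implicit Arguments. Unset Strict Implicit. Unset Printing Implicit Defensive.

(* Along a path of Q, every vertex except the last is the tail of exactly one
   edge of Q, and every vertex except the first is the head of exactly one.
   Contracting Q therefore removes from V_{i*} exactly as many vertices as Q
   has edges with tail in V_{i*} (the path vertex x_Q replaces the last vertex
   of Q), so |V'_{i*}| = |V_{i*}| - #{tails in V_{i*}}, and dually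
   |V'_{*i}| = |V_{*i}| - #{heads in V_{*i}}.  As every edge of Q is bad, an
   edge with tail in V_{i*} has its head in some V_{*j} with j <> i, so the
   two counts are sum_{j<>i} a_ij and sum_{j<>i} a_ji, and the hypothesis
   balances them. *)


Lemma count_zip_behead_fst (T : Type) (P : pred T) x s :
  count (fun z => P z.1) (zip (x :: s) s) + P (last x s) = count P (x :: s).
Proof. by elim: s x => [|y s IHs] x /=; rewrite ?addn0 // -addnA IHs. Qed.

Lemma count_zip_behead_snd (T : Type) (P : pred T) x s :
  count (fun z => P z.2) (zip (x :: s) s) + P x = count P (x :: s).
Proof. by elim: s x => [|y s IHs] x /=; rewrite ?addn0 //; have /= := IHs y; lia. Qed.

Lemma card_uniq_count (T : finType) (P : pred T) (s : seq T) :
  uniq s -> #|[set x | x \in s & P x]| = count P s.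
Proof.
move=> s_uniq; rewrite -size_filter -(card_uniqP (filter_uniq P s_uniq)).
by apply: eq_card => x; rewrite inE mem_filter andbC.
Qed.

Lemma sum_indicator_neq (I : finType) (i c : I) :
  c != i -> \sum_(j | j != i) (c == j : nat) = 1.
Proof.
move=> ci; rewrite (bigD1 c) //= eqxx big1 // => j /andP [_ jc].
by rewrite eq_sym (negbTE jc).
Qed.

Lemma sum_count (I : finType) (T : eqType) (r : pred I) (P : I -> pred T)
    (Q : pred T) (s : seq T) :
  (forall x, x \in s -> \sum_(j | r j) P j x = Q x) ->
  \sum_(j | r j) count (P j) s = count Q s.
Proof.
elim: s => [|x s IHs] sumPQ /=; first by rewrite big1.
rewrite big_split /= sumPQ ?mem_head // IHs // => y ys.
by apply: sumPQ; rewrite in_cons ys orbT.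
Qed.

Section Contraction.
Variables (V : finType) (k : nat) (e : rel V) (part : V -> 'I_k * 'I_k).

Lemma in_Vrow i v : (v \in Vrow part i) = ((part v).1 == i).
Proof.
apply/bigcupP/eqP => [[j _]|<-]; first by rewrite inE => /eqP ->.
by exists (part v).2 => //; rewrite inE -surjective_pairing.
Qed.

Lemma in_Vcol j v : (v \in Vcol part j) = ((part v).2 == j).
Proof.
apply/bigcupP/eqP => [[i _]|<-]; first by rewrite inE => /eqP ->.
by exists (part v).1 => //; rewrite inE -surjective_pairing.
Qed.

Lemma in_bad_edges x :
  (x \in bad_edges e part) = e x.1 x.2 && ((part x.1).1 != (part x.2).2).
Proof.
apply/bigcupP/andP => [[i _ /bigcupP [j ij]]|[ex rc]].
  by rewrite inE in_Vrow in_Vcol => /and3P [-> /eqP -> /eqP ->].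
exists (part x.1).1 => //; apply/bigcupP; exists (part x.2).2 => //.
by rewrite inE in_Vrow in_Vcol ex !eqxx.
Qed.

Definition ps_edge_seq (Qs : seq (seq V)) : seq (V * V) :=
  flatten (map (@path_edges V) Qs).

Definition head_in (P : pred V) (p : seq V) : bool :=
  if p is x :: _ then P x else false.

Definition last_in (P : pred V) (p : seq V) : bool :=
  if p is x :: s then P (last x s) else false.

Lemma mem_ps_edge_seq Qs x : (x \in ps_edges Qs) = (x \in ps_edge_seq Qs).
Proof. by rewrite inE; apply/hasP/flatten_mapP => -[p]; exists p. Qed.

Lemma uniq_ps_edge_seq Qs : uniq (flatten Qs) -> uniq (ps_edge_seq Qs).
Proof.
move=> Qs_uniq; apply: (@map_uniq _ _ snd); apply: subseq_uniq Qs_uniq.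
elim: Qs => [|p Qs IHQs] //; rewrite /ps_edge_seq /= map_cat.
apply: cat_subseq IHQs; case: p => // x s.
by rewrite /path_edges -/(unzip2 _) unzip2_zip //; apply: subseq_cons.
Qed.

Lemma count_ps_edge_seq_fst (P : pred V) Qs :
  count (fun z => P z.1) (ps_edge_seq Qs) + count (last_in P) Qs
  = count P (flatten Qs).
Proof.
elim: Qs => [|[|x s] Qs IHQs] //; rewrite /ps_edge_seq /= in IHQs *.
have := count_zip_behead_fst P x s.
by rewrite !count_cat [path_edges _]/path_edges /=; lia.
Qed.

Lemma count_ps_edge_seq_snd (P : pred V) Qs :
  count (fun z => P z.2) (ps_edge_seq Qs) + count (head_in P) Qs
  = count P (flatten Qs).
Proof.
elim: Qs => [|[|x s] Qs IHQs] //; rewrite /ps_edge_seq /= in IHQs *.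
have := count_zip_behead_snd P x s.
by rewrite !count_cat [path_edges _]/path_edges /=; lia.
Qed.

Lemma card_setD_ps_verts Qs (B : {set V}) :
  uniq (flatten Qs) ->
  #|B| = #|B :\: ps_verts Qs| + count (fun v => v \in B) (flatten Qs).
Proof.
move=> Qs_uniq; rewrite -(cardsID (ps_verts Qs) B) addnC -card_uniq_count //.
by congr (_ + _); apply: eq_card => v; rewrite !inE andbC.
Qed.

Lemma card_cvert_set Qs (A : {set cvert Qs}) (B : {set V}) (P : pred (seq V)) :
  (forall v, (inl v \in A) = (val v \in B)) ->
  (forall q, (inr q \in A) = P (nth [::] Qs q)) ->
  #|A| = #|B :\: ps_verts Qs| + count P Qs.
Proof.
move=> Ainl Ainr; rewrite -sum1_card big_mkcond big_sumType /=; congr (_ + _).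
  under eq_bigr do rewrite Ainl.
  rewrite -big_mkcond /=.
  rewrite -(big_sub_cond [pred v | v \notin ps_verts Qs] (mem B) (fun=> 1)).
  by rewrite sum1dep_card; apply: eq_card => v; rewrite !inE andbC.
rewrite -sum1_count [RHS]big_mkcond (big_nth [::]) big_mkord.
by apply: eq_bigr => q _; rewrite Ainr.
Qed.

Lemma in_cVrow_inl Qs i v : (inl v \in cVrow part Qs i) = (val v \in Vrow part i).
Proof. by apply/bigcupP/bigcupP => -[j _ vij]; exists j; rewrite // ?inE in vij *. Qed.

Lemma in_cVcol_inl Qs j v : (inl v \in cVcol part Qs j) = (val v \in Vcol part j).
Proof. by apply/bigcupP/bigcupP => -[i _ vij]; exists i; rewrite // ?inE in vij *. Qed.

Lemma in_cVrow_inr Qs i q :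
  (inr q \in cVrow part Qs i) = last_in (fun v => v \in Vrow part i) (nth [::] Qs q).
Proof.
apply/bigcupP/idP => [[j _]|].
  by rewrite inE /goes_to; case: nth => [|x s] //= /andP [_]; rewrite in_Vrow.
rewrite /last_in; case nth_q: nth => [|x s] //=; rewrite in_Vrow => row_i.
by exists (part x).2 => //; rewrite inE nth_q /goes_to eqxx.
Qed.

Lemma in_cVcol_inr Qs j q :
  (inr q \in cVcol part Qs j) = head_in (fun v => v \in Vcol part j) (nth [::] Qs q).
Proof.
apply/bigcupP/idP => [[i _]|].
  by rewrite inE /goes_to; case: nth => [|x s] //= /andP []; rewrite in_Vcol.
rewrite /head_in; case nth_q: nth => [|x s] //=; rewrite in_Vcol => col_j.
by exists (part (last x s)).1 => //; rewrite inE nth_q /goes_to col_j eqxx.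
Qed.

Lemma card_cVrow Qs i : uniq (flatten Qs) ->
  #|cVrow part Qs i| + count (fun z => z.1 \in Vrow part i) (ps_edge_seq Qs)
  = #|Vrow part i|.
Proof.
move=> Qs_uniq; rewrite (card_cvert_set (in_cVrow_inl i) (in_cVrow_inr i)).
by rewrite [RHS](card_setD_ps_verts _ Qs_uniq) -count_ps_edge_seq_fst addnAC addnA.
Qed.

Lemma card_cVcol Qs j : uniq (flatten Qs) ->
  #|cVcol part Qs j| + count (fun z => z.2 \in Vcol part j) (ps_edge_seq Qs)
  = #|Vcol part j|.
Proof.
move=> Qs_uniq; rewrite (card_cvert_set (in_cVcol_inl j) (in_cVcol_inr j)).
by rewrite [RHS](card_setD_ps_verts _ Qs_uniq) -count_ps_edge_seq_snd addnAC addnA.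
Qed.

Section BadPathSystem.
Variable Qs : seq (seq V).
Hypothesis Qs_uniq : uniq (flatten Qs).
Hypothesis Qs_bad : ps_edges Qs \subset bad_edges e part.

Lemma bad_ps_edge_seq z :
  z \in ps_edge_seq Qs -> e z.1 z.2 && ((part z.1).1 != (part z.2).2).
Proof. by rewrite -mem_ps_edge_seq -in_bad_edges; apply: (subsetP Qs_bad). Qed.

Lemma acount_count i j : acount e part Qs i j =
  count (fun z => (z.1 \in Vrow part i) && (z.2 \in Vcol part j)) (ps_edge_seq Qs).
Proof.
rewrite /acount -card_uniq_count ?uniq_ps_edge_seq //.
apply: eq_card => z; rewrite in_setI mem_ps_edge_seq !inE.
by case zQ: (z \in _) => //=; case/andP: (bad_ps_edge_seq zQ) => ->.
Qed.

Lemma sum_acount_row i : \sum_(j < k | j != i) acount e part Qs i j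
  = count (fun z => z.1 \in Vrow part i) (ps_edge_seq Qs).
Proof.
under eq_bigr do rewrite acount_count.
apply: sum_count => z /bad_ps_edge_seq /andP [_ row_ne_col] /=.
under eq_bigr do rewrite in_Vrow in_Vcol.
rewrite in_Vrow; case: eqP => [row_i | _]; last by rewrite big1.
by apply: sum_indicator_neq; rewrite -row_i eq_sym.
Qed.

Lemma sum_acount_col j : \sum_(i < k | i != j) acount e part Qs i j
  = count (fun z => z.2 \in Vcol part j) (ps_edge_seq Qs).
Proof.
under eq_bigr do rewrite acount_count.
apply: sum_count => z /bad_ps_edge_seq /andP [_ row_ne_col] /=.
under eq_bigr do rewrite in_Vrow in_Vcol andbC.
rewrite in_Vcol; case: eqP => [col_j | _]; last by rewrite big1.
by apply: sum_indicator_neq; rewrite -col_j.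
Qed.

End BadPathSystem.

End Contraction.

Local Open Scope ring_scope.

Theorem lemma4p10 (k : nat) (V : finType) (e : rel V)
    (part : V -> 'I_k * 'I_k) (Qs : seq (seq V)) :
  path_system e Qs ->
  ps_edges Qs \subset bad_edges e part ->
  (forall i : 'I_k,
     ((\sum_(j < k | j != i) acount e part Qs i j)%N%:Z
      - (\sum_(j < k | j != i) acount e part Qs j i)%N%:Z)
     = (#|Vrow part i|%:Z - #|Vcol part i|%:Z)) ->
  forall i : 'I_k, #|cVrow part Qs i| = #|cVcol part Qs i|.
Proof.
move=> /andP [_ Qs_uniq] Qs_bad balanced i.
have := balanced i; rewrite sum_acount_row // sum_acount_col //.
by rewrite -(card_cVrow part i Qs_uniq) -(card_cVcol part i Qs_uniq); lia.
Qed.
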